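(* Let $N\ge3$ be odd. For every $s\in(1,2^{(N-1)/2})$ there exists $\theta_s\in\mathcal G$ such that $s=\langle M_N(\theta_s)\rangle$ if $N\equiv3\pmod4$, and $s=\langle\tilde M_N(\theta_s)\rangle$ if $N\equiv1\pmod 4$.
   Context: $\mathcal G=(\pi/4,\pi/2)\cup(\pi/2,3\pi/4)\cup(5\pi/4,3\pi/2)\cup(3\pi/2,7\pi/4)$. For $\bm x\in\{0,1\}^N$ let $|\bm x|=\sum_kx_k$, $c_{\bm x}=\cos\big[\frac\pi2\big(\frac{N-1}2-|\bm x|\big)\big]$. The MABK expression is $\langle M_N\rangle=2^{(1-N)/2}\sum_{\bm x}c_{\bm x}\langle A^{(1)}_{x_1}\cdots A^{(N)}_{x_N}\rangle$, with quantum maximum $2^{(N-1)/2}$. Consider the strategy with state $(|0\rangle^{\otimes N}+i|1\rangle^{\otimes N})/\sqrt2$ and $A^{(k)}_0=\sigma_X$, $A^{(k)}_1=\cos\theta\sigma_X+\sin\theta\sigma_Y$ for all $k$; its full correlator at input $\bm x$ is $\sin(|\bm x|\theta)$. Define $\langle M_N(\theta)\rangle:=2^{(1-N)/2}\sum_{\bm x}c_{\bm x}\sin(|\bm x|\theta)$ (its MABK value), and $\langle\tilde M_N(\theta)\rangle$ as the value on this strategy of the relabelled MABK expression obtained by substituting $A^{(k)}_0\mapsto A^{(k)}_1$, $A^{(k)}_1\mapsto -A^{(k)}_0$ for every party, i.e. $\langle\tilde M_N(\theta)\rangle=2^{(1-N)/2}\sum_{\bm x}c_{\bm x}(-1)^{|\bm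 x|}\sin((N-|\bm x|)\theta)$. *)

From Stdlib Require Import Reals List Lra.
Import ListNotations.
Open Scope R_scope.

Fixpoint bitstrings (n : nat) : list (list bool) :=
  match n with
  | O => [ [] ]
  | S m => map (cons false) (bitstrings m) ++ map (cons true) (bitstrings m)
  end.

Definition weight (x : list bool) : nat := count_occ Bool.bool_dec x true.

Definition cx (N : nat) (x : list bool) : R :=
  cos (PI / 2 * ((INR N - 1) / 2 - INR (weight x))).

Definition sum_bits (N : nat) (f : list bool -> R) : R :=
  fold_right Rplus 0 (map f (bitstrings N)).

Definition MABK (N : nat) (theta : R) : R :=
  Rpower 2 ((1 - INR N) / 2) *
  sum_bits N (fun x => cx N x * sin (INR (weight x) * theta)).

Definition MABK_tilde (N : nat) (theta : R) : R :=
  Rpower 2 ((1 - INR N) / 2) *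
  sum_bits N (fun x => cx N x * (-1) ^ (weight x) *
                       sin ((INR N - INR (weight x)) * theta)).

Definition in_G (t : R) : Prop :=
  (PI / 4 < t < PI / 2) \/ (PI / 2 < t < 3 * PI / 4) \/
  (5 * PI / 4 < t < 3 * PI / 2) \/ (3 * PI / 2 < t < 7 * PI / 4).

(* Summing the product-to-sum form of [c_x sin(|x| theta)] over [{0,1}^N]
   with the binomial theorem turns both MABK values into
   [2^((N-1)/2) P_N(b, theta)] for an explicit two-term trigonometric
   profile [P_N], where [cos b = 0] in the relevant residue class of [N]
   modulo 4.  At [theta = pi/2] the profile equals [sin b = +-1], while a
   little further on (at [pi/2 + pi/N], or [3pi/4] when [N = 3]) it is at
   most [2^((1-N)/2)] in absolute value; by continuity every value in
   [(1, 2^((N-1)/2))] is attained in between.  If [sin b = -1] the same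
   argument runs on [(3pi/2, 7pi/4)], since shifting [theta] by [pi] flips
   the sign of [b] for odd [N]. *)

From Stdlib Require Import Reals Lra Lia List.
Open Scope R_scope.

Lemma sum_bits_S n f :
  sum_bits (S n) f =
  sum_bits n (fun x => f (false :: x)) + sum_bits n (fun x => f (true :: x)).
Proof.
  unfold sum_bits; simpl; rewrite map_app, !map_map.
  generalize (map (fun x => f (true :: x)) (bitstrings n)).
  induction (bitstrings n) as [|x l IH]; intro r; simpl; [ring | rewrite IH; ring].
Qed.

Lemma sum_bits_ext n f g :
  (forall x, f x = g x) -> sum_bits n f = sum_bits n g.
Proof. intro Hfg; unfold sum_bits; now rewrite (map_ext f g Hfg). Qed.

Lemma sum_bits_lin n a c f g :
  sum_bits n (fun x => a * f x + c * g x) = a * sum_bits n f + c * sum_bits n g.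
Proof.
  revert f g; induction n as [|n IH]; intros f g.
  - unfold sum_bits; simpl; ring.
  - rewrite !sum_bits_S, !IH; ring.
Qed.

Lemma sum_bits_sin_weight n d phi :
  sum_bits n (fun x => sin (d + INR (weight x) * phi)) =
  (2 * cos (phi / 2)) ^ n * sin (d + INR n * phi / 2).
Proof.
  revert d; induction n as [|n IH]; intro d.
  - unfold sum_bits, weight; simpl.
    replace (d + 0 * phi) with d by ring; replace (d + 0 * phi / 2) with d by field.
    ring.
  - rewrite sum_bits_S.
    rewrite (sum_bits_ext n (fun x => sin (d + INR (weight (true :: x)) * phi))
               (fun x => sin ((d + phi) + INR (weight x) * phi)))
      by (intro x; change (weight (true :: x)) with (S (weight x));
          rewrite S_INR; f_equal; ring).
    change (fun x => sin (d + INR (weight (false :: x)) * phi))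
      with (fun x => sin (d + INR (weight x) * phi)).
    rewrite !IH, S_INR.
    set (u := d + (INR n + 1) * phi / 2).
    replace (d + INR n * phi / 2) with (u - phi / 2) by (unfold u; field).
    replace (d + phi + INR n * phi / 2) with (u + phi / 2) by (unfold u; field).
    rewrite sin_minus, sin_plus; simpl; ring.
Qed.

Definition mabk_profile (N : nat) (b t : R) : R :=
  cos ((t - PI / 2) / 2) ^ N * sin (b + INR N * (t - PI / 2) / 2) +
  cos ((t + PI / 2) / 2) ^ N * sin (INR N * (t + PI / 2) / 2 - b).

Definition mabk_qmax (N : nat) : R := Rpower 2 ((INR N - 1) / 2).

Lemma mabk_qmax_pos N : 0 < mabk_qmax N.
Proof. apply exp_pos. Qed.

Lemma mabk_normalisation N : Rpower 2 ((1 - INR N) / 2) * / 2 * 2 ^ N = mabk_qmax N.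
Proof.
  unfold mabk_qmax; rewrite <- Rpower_pow by lra.
  replace (/ 2) with (Rpower 2 (Ropp 1))
    by (rewrite Rpower_Ropp, Rpower_1 by lra; reflexivity).
  rewrite <- !Rpower_plus; f_equal; field.
Qed.

Lemma MABK_profile N t :
  MABK N t = mabk_qmax N * mabk_profile N (PI / 2 * ((INR N - 1) / 2)) t.
Proof.
  unfold MABK; set (b := PI / 2 * ((INR N - 1) / 2)).
  rewrite (sum_bits_ext N _ (fun x => / 2 * sin (b + INR (weight x) * (t - PI / 2)) +
                                      / 2 * sin (- b + INR (weight x) * (t + PI / 2)))).
  2:{ intro x; unfold cx; set (w := INR (weight x)).
      replace (b + w * (t - PI / 2)) with (w * t + PI / 2 * ((INR N - 1) / 2 - w))
        by (unfold b; ring).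
      replace (- b + w * (t + PI / 2)) with (w * t - PI / 2 * ((INR N - 1) / 2 - w))
        by (unfold b; ring).
      rewrite sin_plus, sin_minus; field. }
  rewrite sum_bits_lin, !sum_bits_sin_weight, <- mabk_normalisation.
  unfold mabk_profile; rewrite !Rpow_mult_distr.
  replace (- b + INR N * (t + PI / 2) / 2) with (INR N * (t + PI / 2) / 2 - b) by ring.
  ring.
Qed.

Lemma pow_neg1_cos k y : (-1) ^ k * cos y = cos (y + INR k * PI).
Proof.
  induction k as [|k IH].
  - simpl; replace (y + 0 * PI) with y by ring; ring.
  - rewrite S_INR; replace (y + (INR k + 1) * PI) with ((y + INR k * PI) + PI) by ring.
    rewrite neg_cos, <- IH; simpl; ring.
Qed.

Lemma MABK_tilde_profile N t :
  MABK_tilde N t =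
  mabk_qmax N * mabk_profile N (PI / 2 * ((INR N - 1) / 2) + INR N * PI / 2) t.
Proof.
  unfold MABK_tilde; set (b := PI / 2 * ((INR N - 1) / 2)).
  rewrite (sum_bits_ext N _
    (fun x => / 2 * sin ((INR N * t + b) + INR (weight x) * (PI / 2 - t)) +
              / 2 * sin ((INR N * t - b) + INR (weight x) * (- (t + PI / 2))))).
  2:{ intro x; unfold cx; set (w := INR (weight x)).
      rewrite (Rmult_comm (cos _)), pow_neg1_cos; fold w.
      replace (PI / 2 * ((INR N - 1) / 2 - w) + w * PI) with (b + w * (PI / 2))
        by (unfold b; field).
      replace (INR N * t + b + w * (PI / 2 - t))
        with ((INR N - w) * t + (b + w * (PI / 2))) by ring.
      replace (INR N * t - b + w * - (t + PI / 2))
        with ((INR N - w) * t - (b + w * (PI / 2))) by ring.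
      rewrite sin_plus, sin_minus; field. }
  rewrite sum_bits_lin, !sum_bits_sin_weight, <- mabk_normalisation.
  unfold mabk_profile; rewrite !Rpow_mult_distr.
  replace ((PI / 2 - t) / 2) with (- ((t - PI / 2) / 2)) by field.
  replace (- (t + PI / 2) / 2) with (- ((t + PI / 2) / 2)) by field.
  rewrite !cos_neg.
  replace (INR N * t + b + INR N * (PI / 2 - t) / 2)
    with (b + INR N * PI / 2 + INR N * (t - PI / 2) / 2) by field.
  replace (INR N * t - b + INR N * - (t + PI / 2) / 2)
    with (INR N * (t + PI / 2) / 2 - (b + INR N * PI / 2)) by field.
  ring.
Qed.

Lemma mabk_profile_PI2 N b : (1 <= N)%nat -> mabk_profile N b (PI / 2) = sin b.
Proof.
  intro HN; unfold mabk_profile.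
  replace ((PI / 2 - PI / 2) / 2) with 0 by field.
  replace (b + INR N * (PI / 2 - PI / 2) / 2) with b by field.
  replace ((PI / 2 + PI / 2) / 2) with (PI / 2) by field.
  rewrite cos_0, cos_PI2, pow1, pow_i by lia; ring.
Qed.

(* For odd [N], shifting [t] by [pi] swaps the two terms of the profile. *)
Lemma mabk_profile_shift_PI N b t :
  Nat.odd N = true -> mabk_profile N b (t + PI) = mabk_profile N (- b) t.
Proof.
  intro Hodd; apply Nat.odd_spec in Hodd as [k ->].
  assert (HN : INR (2 * k + 1) = 2 * INR k + 1) by (rewrite plus_INR, mult_INR; simpl; ring).
  unfold mabk_profile; rewrite HN.
  replace ((t + PI - PI / 2) / 2) with ((t + PI / 2) / 2) by field.
  replace ((t + PI + PI / 2) / 2) with ((t - PI / 2) / 2 + PI) by field.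
  replace ((2 * INR k + 1) * (t + PI + PI / 2) / 2 - b)
    with ((- b + (2 * INR k + 1) * (t - PI / 2) / 2 + PI) + 2 * INR k * PI) by field.
  rewrite sin_period, neg_sin, neg_cos.
  replace (- cos ((t - PI / 2) / 2)) with (-1 * cos ((t - PI / 2) / 2)) by ring.
  rewrite Rpow_mult_distr, Nat.add_1_r, pow_1_odd.
  replace (b + (2 * INR k + 1) * (t + PI - PI / 2) / 2)
    with ((2 * INR k + 1) * (t + PI / 2) / 2 - - b) by field.
  ring.
Qed.

Lemma Rabs_pow_le_1 x n : Rabs x <= 1 -> Rabs (x ^ n) <= 1.
Proof.
  intro Hx; rewrite <- RPow_abs, <- (pow1 n).
  apply pow_incr; split; [apply Rabs_pos | exact Hx].
Qed.

Lemma mabk_profile_near_PI2 N b d :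
  cos b = 0 ->
  Rabs (mabk_profile N b (PI / 2 + d)) <=
  Rabs (cos (INR N * d / 2)) + Rabs (sin (d / 2)) ^ N.
Proof.
  intro Hb; unfold mabk_profile.
  replace ((PI / 2 + d - PI / 2) / 2) with (d / 2) by field.
  replace (b + INR N * (PI / 2 + d - PI / 2) / 2) with (b + INR N * d / 2) by field.
  replace ((PI / 2 + d + PI / 2) / 2) with (PI / 2 + d / 2) by field.
  replace (cos (PI / 2 + d / 2)) with (- sin (d / 2))
    by (rewrite cos_plus, cos_PI2, sin_PI2; ring).
  rewrite sin_plus, Hb, Rmult_0_l, Rplus_0_r.
  eapply Rle_trans; [apply Rabs_triang |].
  rewrite !Rabs_mult, <- (RPow_abs (- _)), Rabs_Ropp.
  assert (Hc : Rabs (cos (d / 2) ^ N) <= 1) by (apply Rabs_pow_le_1, Rabs_le, COS_bound).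
  assert (Hs1 : Rabs (sin b) <= 1) by (apply Rabs_le, SIN_bound).
  assert (Hs2 : Rabs (sin (INR N * (PI / 2 + d + PI / 2) / 2 - b)) <= 1)
    by (apply Rabs_le, SIN_bound).
  pose proof (Rabs_pos (cos (INR N * d / 2))).
  pose proof (pow_le _ N (Rabs_pos (sin (d / 2)))).
  pose proof (Rabs_pos (cos (d / 2) ^ N)).
  pose proof (Rabs_pos (sin b)).
  assert (Rabs (cos (d / 2) ^ N) * Rabs (sin b) <= 1) by nra.
  nra.
Qed.

Lemma mabk_profile_continuous N b : continuity (mabk_profile N b).
Proof. unfold mabk_profile; reg. Qed.

Lemma mabk_profile_IVT N b d s :
  (1 <= N)%nat -> cos b = 0 -> sin b = 1 -> 0 < d ->
  mabk_qmax N * (Rabs (cos (INR N * d / 2)) + Rabs (sin (d / 2)) ^ N) <= 1 ->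
  1 < s < mabk_qmax N ->
  exists t, PI / 2 < t < PI / 2 + d /\ mabk_qmax N * mabk_profile N b t = s.
Proof.
  intros HN Hcos Hsin Hd Hsmall Hs.
  set (f t := s - mabk_qmax N * mabk_profile N b t).
  assert (Hf0 : f (PI / 2) < 0)
    by (unfold f; rewrite mabk_profile_PI2, Hsin by exact HN; lra).
  assert (Hf1 : 0 < f (PI / 2 + d)).
  { unfold f.
    pose proof (mabk_profile_near_PI2 N b d Hcos).
    pose proof (Rle_abs (mabk_profile N b (PI / 2 + d))).
    pose proof (mabk_qmax_pos N).
    nra. }
  assert (Hfc : continuity f).
  { apply continuity_minus; [apply continuity_const; now intros ? ? |].
    apply continuity_scal, mabk_profile_continuous. }
  destruct (IVT f (PI / 2) (PI / 2 + d) Hfc ltac:(lra) Hf0 Hf1) as [t [Ht Hft]].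
  exists t; split.
  - destruct (Req_dec t (PI / 2)), (Req_dec t (PI / 2 + d)); subst; lra.
  - unfold f in Hft; lra.
Qed.

Lemma mabk_qmax_3 : mabk_qmax 3 = 2.
Proof.
  unfold mabk_qmax; replace ((INR 3 - 1) / 2) with 1 by (simpl; field).
  apply Rpower_1; lra.
Qed.

Lemma sin_PI8_sqr_le : sin (PI / 8) ^ 2 <= 3 / 20.
Proof.
  pose proof (cos_2a_sin (PI / 8)) as Hcos2.
  replace (2 * (PI / 8)) with (PI / 4) in Hcos2 by field.
  rewrite cos_PI4 in Hcos2.
  pose proof (sqrt_sqrt 2 ltac:(lra)); pose proof (sqrt_lt_R0 2 ltac:(lra)).
  assert (7 / 10 <= 1 / sqrt 2).
  { apply Rmult_le_reg_r with (sqrt 2); [lra |].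
    replace (1 / sqrt 2 * sqrt 2) with 1 by (field; lra); nra. }
  simpl; lra.
Qed.

Lemma mabk_window_3 :
  mabk_qmax 3 * (Rabs (cos (INR 3 * (PI / 4) / 2)) + Rabs (sin (PI / 4 / 2)) ^ 3) <= 1.
Proof.
  rewrite mabk_qmax_3.
  replace (INR 3 * (PI / 4) / 2) with (PI / 2 - PI / 8) by (simpl; field).
  replace (PI / 4 / 2) with (PI / 8) by field.
  rewrite cos_shift.
  assert (Ha : 0 < sin (PI / 8)) by (pose proof PI_RGT_0; apply sin_gt_0; lra).
  rewrite Rabs_pos_eq by lra.
  pose proof sin_PI8_sqr_le.
  set (a := sin (PI / 8)) in *.
  assert (Hsq : (2 * (a + a ^ 3)) ^ 2 <= 1) by nra.
  nra.
Qed.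

Lemma mabk_window_ge5 N :
  (5 <= N)%nat ->
  mabk_qmax N * (Rabs (cos (INR N * (PI / INR N) / 2)) + Rabs (sin (PI / INR N / 2)) ^ N)
    <= 1.
Proof.
  intro HN; assert (H5 : 5 <= INR N) by (apply (le_INR 5) in HN; simpl in HN; lra).
  pose proof PI2_1; pose proof PI_4.
  replace (INR N * (PI / INR N) / 2) with (PI / 2) by (field; lra).
  rewrite cos_PI2, Rabs_R0, Rplus_0_l.
  assert (Hx : 0 < PI / INR N / 2 <= 2 / 5).
  { split; [apply Rdiv_lt_0_compat; [apply Rdiv_lt_0_compat |]; lra |].
    apply Rmult_le_reg_r with (2 * INR N); [lra |].
    replace (PI / INR N / 2 * (2 * INR N)) with PI by (field; lra); nra. }
  assert (Hsin : Rabs (sin (PI / INR N / 2)) <= / 2).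
  { pose proof (sin_lt_x _ (proj1 Hx)).
    pose proof (sin_gt_0 (PI / INR N / 2) (proj1 Hx) ltac:(lra)).
    rewrite Rabs_pos_eq; lra. }
  assert (Hqmax : mabk_qmax N <= 2 ^ N).
  { unfold mabk_qmax; rewrite <- Rpower_pow by lra; apply Rle_Rpower; lra. }
  assert (Hpow : Rabs (sin (PI / INR N / 2)) ^ N <= (/ 2) ^ N)
    by (apply pow_incr; split; [apply Rabs_pos | exact Hsin]).
  assert (H2 : 2 ^ N * (/ 2) ^ N = 1) by (rewrite <- Rpow_mult_distr, Rinv_r, pow1; lra).
  pose proof (mabk_qmax_pos N); pose proof (pow_le _ N (Rabs_pos (sin (PI / INR N / 2)))).
  pose proof (pow_le (/ 2) N ltac:(lra)).
  nra.
Qed.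

Lemma mabk_window N :
  (3 <= N)%nat -> Nat.odd N = true ->
  exists d, 0 < d <= PI / 4 /\
    mabk_qmax N * (Rabs (cos (INR N * d / 2)) + Rabs (sin (d / 2)) ^ N) <= 1.
Proof.
  intros H3 Hodd; pose proof PI_RGT_0.
  assert (HN : N = 3%nat \/ (5 <= N)%nat)
    by (apply Nat.odd_spec in Hodd as [k ->]; lia).
  destruct HN as [-> | H5].
  - exists (PI / 4); split; [lra | exact mabk_window_3].
  - assert (5 <= INR N) by (apply (le_INR 5) in H5; simpl in H5; lra).
    exists (PI / INR N); split; [| exact (mabk_window_ge5 N H5)].
    split; [apply Rdiv_lt_0_compat; lra |].
    apply Rmult_le_compat_l; [lra |]; apply Rinv_le_contravar; lra.
Qed.

Lemma mabk_profile_hits_G N b s :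
  (3 <= N)%nat -> Nat.odd N = true -> cos b = 0 -> 1 < s < mabk_qmax N ->
  exists theta, in_G theta /\ mabk_qmax N * mabk_profile N b theta = s.
Proof.
  intros H3 Hodd Hcos Hs; pose proof PI_RGT_0.
  destruct (mabk_window N H3 Hodd) as [d [Hd Hsmall]].
  assert (Hsin : sin b = 1 \/ sin b = -1).
  { pose proof (sin2_cos2 b) as Hpyth; rewrite Hcos in Hpyth; unfold Rsqr in Hpyth.
    assert (Hprod : (sin b - 1) * (sin b + 1) = 0) by lra.
    apply Rmult_integral in Hprod; lra. }
  destruct Hsin as [Hsin | Hsin].
  - destruct (mabk_profile_IVT N b d s ltac:(lia) Hcos Hsin (proj1 Hd) Hsmall Hs)
      as [t [Ht Hval]].
    exists t; split; [unfold in_G; lra | exact Hval].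
  - assert (Hcos' : cos (- b) = 0) by (rewrite cos_neg; exact Hcos).
    assert (Hsin' : sin (- b) = 1) by (rewrite sin_neg; lra).
    destruct (mabk_profile_IVT N (- b) d s ltac:(lia) Hcos' Hsin' (proj1 Hd) Hsmall Hs)
      as [t [Ht Hval]].
    exists (t + PI); split.
    + unfold in_G; lra.
    + rewrite mabk_profile_shift_PI by exact Hodd; exact Hval.
Qed.

Lemma cos_PI2_add_mult_PI k : cos (PI / 2 + INR k * PI) = 0.
Proof. rewrite <- pow_neg1_cos, cos_PI2; ring. Qed.

Lemma mabk_phase_cos_3 N :
  (N mod 4 = 3)%nat -> cos (PI / 2 * ((INR N - 1) / 2)) = 0.
Proof.
  intro Hmod; rewrite (Nat.div_mod_eq N 4), Hmod, plus_INR, mult_INR.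
  replace (PI / 2 * ((INR 4 * INR (N / 4) + INR 3 - 1) / 2))
    with (PI / 2 + INR (N / 4) * PI) by (simpl; field).
  apply cos_PI2_add_mult_PI.
Qed.

Lemma mabk_tilde_phase_cos_1 N :
  (N mod 4 = 1)%nat -> cos (PI / 2 * ((INR N - 1) / 2) + INR N * PI / 2) = 0.
Proof.
  intro Hmod; rewrite (Nat.div_mod_eq N 4), Hmod, plus_INR, mult_INR.
  replace (PI / 2 * ((INR 4 * INR (N / 4) + INR 1 - 1) / 2) +
           (INR 4 * INR (N / 4) + INR 1) * PI / 2)
    with (PI / 2 + INR (3 * (N / 4)) * PI) by (rewrite mult_INR; simpl; field).
  apply cos_PI2_add_mult_PI.
Qed.

Theorem proposition5 (N : nat) :
  (3 <= N)%nat -> Nat.odd N = true ->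
  forall s : R, 1 < s < Rpower 2 ((INR N - 1) / 2) ->
  exists theta : R, in_G theta /\
    ((N mod 4 = 3)%nat -> s = MABK N theta) /\
    ((N mod 4 = 1)%nat -> s = MABK_tilde N theta).
Proof.
  intros H3 Hodd s Hs; change (Rpower 2 ((INR N - 1) / 2)) with (mabk_qmax N) in Hs.
  assert (Hmod : (N mod 4 = 3 \/ N mod 4 = 1)%nat).
  { pose proof (Nat.div_mod_eq N 4); pose proof (Nat.mod_upper_bound N 4 ltac:(lia)).
    apply Nat.odd_spec in Hodd as [k Hk]; lia. }
  destruct Hmod as [Hmod | Hmod].
  - destruct (mabk_profile_hits_G N _ s H3 Hodd (mabk_phase_cos_3 N Hmod) Hs)
      as [theta [HG Hval]].
    exists theta; repeat split; [exact HG | | ]; intro Hmod'.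
    + now rewrite MABK_profile.
    + rewrite Hmod in Hmod'; discriminate.
  - destruct (mabk_profile_hits_G N _ s H3 Hodd (mabk_tilde_phase_cos_1 N Hmod) Hs)
      as [theta [HG Hval]].
    exists theta; repeat split; [exact HG | | ]; intro Hmod'.
    + rewrite Hmod in Hmod'; discriminate.
    + now rewrite MABK_tilde_profile.
Qed.
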